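(* Let $A \in \mathbb{R}^{n\times d}$, $b \in \mathbb{R}^n$ with $Ax=b$ consistent. Let $\lbrace W_1,\ldots,W_N\rbrace \subset \mathbb{R}^n$ and let $w$ be a random variable with $\mathbb{P}[w = W_j] > 0$ for $j=1,\ldots,N$ and $\sum_{j=1}^N \mathbb{P}[w = W_j] = 1$. Let $\lbrace w_l : l \geq 0\rbrace$ be sampled from $\lbrace W_1,\ldots,W_N\rbrace$ without replacement, and once the set is exhausted it is repopulated with its original elements and sampling without replacement is repeated. Let $\mathcal{R}(w) = \mathcal{N}(w)^\perp$ where $\mathcal{N}(w) = \mathrm{span}\lbrace z\in\mathbb{R}^d : \mathbb{P}[z'A'w=0]=1\rbrace$, and $T = \min\lbrace k\geq 0 : \mathrm{span}\lbrace A'w_0,\ldots,A'w_k\rbrace \supset \mathcal{R}(w)\rbrace$. For $x_0 \in \mathbb{R}^d$ and $S_0 = I_d$ define for $l \geq 0$ $$x_{l+1} = \begin{cases} x_l + \dfrac{S_l A' w_l w_l'(b - A x_l)}{w_l' A S_l A' w_l} & S_l A'w_l \neq 0,\\ x_l & \text{otherwise,}\end{cases}\qquad S_{l+1} = \begin{cases} S_l - \dfrac{S_l A' w_l w_l' A S_l}{w_l' A S_l A' w_l} & S_l A' w_l \neq 0,\\ S_l & \text{otherwise.}\end{cases}$$ Then $T \leq N-1$. Moreover, $Ax_{T+1} = b$ for every initialization $x_0$ if $\mathrm{span}\lbrace A'W_1,\ldots,A'W_N\rbrace = \mathrm{row}(A)$, and this holds if $\mathrm{span}\lbrace W_1,\ldots,W_N\rbrace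 = \mathbb{R}^n$.
   Context: $\mathrm{row}(A)$ is the row space of $A$; $A'$ is the transpose. *)

From HB Require Import structures.
From mathcomp Require Import all_boot all_order all_algebra.
From mathcomp Require Import reals.
Set Implicit Arguments. Unset Strict Implicit. Unset Printing Implicit Defensive.
Import Order.TTheory GRing.Theory Num.Theory.
Local Open Scope ring_scope.

Section RK.
Variables (R : realType) (n d N : nat).
Variables (A : 'M[R]_(n, d)) (b : 'cV[R]_n).

(* finite distribution of w: P[w = W j] = p j *)
Definition prob_orth (W : 'I_N -> 'cV[R]_n) (p : 'I_N -> R) (z : 'rV[R]_d) : R :=
  \sum_(j < N | (z *m (A^T *m W j)) == 0) p j.

Definition Nset W p (z : 'rV[R]_d) : Prop := prob_orth W p z = 1.

Definition in_span (S : 'rV[R]_d -> Prop) (v : 'rV[R]_d) : Prop :=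
  exists (k : nat) (c : 'I_k -> R) (u : 'I_k -> 'rV[R]_d),
    (forall i, S (u i)) /\ v = \sum_(i < k) c i *: u i.

Definition Rset W p (v : 'rV[R]_d) : Prop :=
  forall z, in_span (Nset W p) z -> v *m z^T = 0.

Definition span_upto (w : nat -> 'cV[R]_n) (k : nat) : 'M[R]_(k.+1, d) :=
  \matrix_(i < k.+1) ((w i)^T *m A).

Definition covers W p (w : nat -> 'cV[R]_n) (k : nat) : Prop :=
  forall v, Rset W p v -> (v <= span_upto w k)%MS.

Definition rk_step (wl : 'cV[R]_n) (xS : 'cV[R]_d * 'M[R]_d) : 'cV[R]_d * 'M[R]_d :=
  let x := xS.1 in let S := xS.2 in
  let u := S *m A^T *m wl in
  if u == 0 then (x, S) else
  let den := (wl^T *m A *m S *m A^T *m wl) 0 0 in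
  (x + den^-1 *: (S *m A^T *m wl *m (wl^T *m (b - A *m x))),
   S - den^-1 *: (S *m A^T *m wl *m (wl^T *m A *m S))).

Fixpoint rk_iter (w : nat -> 'cV[R]_n) (x0 : 'cV[R]_d) (l : nat) : 'cV[R]_d * 'M[R]_d :=
  match l with
  | 0 => (x0, 1%:M)
  | l'.+1 => rk_step (w l') (rk_iter w x0 l')
  end.

Definition Wmx (W : 'I_N -> 'cV[R]_n) : 'M[R]_(N, n) := \matrix_(j < N) (W j)^T.
Definition AWmx (W : 'I_N -> 'cV[R]_n) : 'M[R]_(N, d) := \matrix_(j < N) ((W j)^T *m A).

End RK.

(** Starting from [S_0 = I], the update [S_(l+1) = S_l - u u' / (u' u)] with
  [u = S_l A' w_l] keeps [S_l] a symmetric idempotent, so by induction [S_l] is the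
  orthogonal projector annihilating [A' w_0, ..., A' w_(l-1)]; and for any solution [z]
  of [A z = b] the iterate satisfies [x_l = z + S_l (x_0 - z)].  Hence once
  [span{A' w_0, ..., A' w_T}] contains [row(A)], we get [A S_(T+1) = 0] and
  [A x_(T+1) = b].  Because every [W j] has positive probability, [N(w)] is the kernel
  of the matrix with rows [W_j' A], so [R(w)] is its row space; the first [N] samples
  run through all of [W], whence [T <= N - 1]. *)

From HB Require Import structures.
From mathcomp Require Import all_boot all_order all_algebra.
From mathcomp Require Import reals zify.
Import Order.TTheory GRing.Theory Num.Theory.
Set Implicit Arguments. Unset Strict Implicit. Unset Printing Implicit Defensive.
Local Open Scope ring_scope.

Lemma psum_eq1P (R : numDomainType) (I : finType) (p : I -> R) (P : pred I) :
  (forall j, 0 < p j) -> \sum_j p j = 1 ->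
  \sum_(j | P j) p j = 1 <-> forall j, P j.
Proof.
move=> p_pos p_sum; split => [sumP j | allP]; last first.
  by rewrite -p_sum; apply: eq_bigl => j; rewrite allP.
have sum_notP0 : \sum_(i | ~~ P i) p i = 0.
  by apply: (addrI 1); rewrite addr0 -{1}sumP -p_sum [RHS](bigID P).
apply: contraT => notPj.
have /(psumr_eq0P (fun i _ => ltW (p_pos i)) sum_notP0) pj0 := notPj.
by move: (p_pos j); rewrite pj0 ltxx.
Qed.

Section OrthogonalProjector.
Variables (R : realFieldType) (d : nat).
Implicit Types (S : 'M[R]_d) (a u : 'cV[R]_d).

Definition orth_proj S := S^T = S /\ S *m S = S.

Lemma dotmx_eq0 u : ((u^T *m u) 0 0 == 0) = (u == 0).
Proof.
apply/idP/eqP => [/eqP uu0 | ->]; last by rewrite mulmx0 mxE.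
have sq_ge0 k : true -> 0 <= u^T 0 k * u k 0 by rewrite mxE -expr2 sqr_ge0.
apply/matrixP => i j; rewrite (ord1 j) mxE.
move: uu0; rewrite mxE => /(psumr_eq0P sq_ge0)/(_ i isT)/eqP.
by rewrite mxE -expr2 sqrf_eq0 => /eqP.
Qed.

Definition proj_step S a : 'M[R]_d :=
  let u := S *m a in S - ((u^T *m u) 0 0)^-1 *: (u *m u^T).

Section ProjStep.
Variables (S : 'M[R]_d) (a : 'cV[R]_d).
Hypothesis S_proj : orth_proj S.
Let u := S *m a.
Let den := (u^T *m u) 0 0.
Let c := den^-1.

Let aT_S : a^T *m S = u^T.
Proof. by rewrite /u trmx_mul S_proj.1. Qed.

Let S_u : S *m u = u.
Proof. by rewrite /u mulmxA S_proj.2. Qed.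

Let uT_S : u^T *m S = u^T.
Proof. by rewrite -aT_S -mulmxA S_proj.2. Qed.

Let uT_u : u^T *m u = den%:M.
Proof. exact: mx11_scalar. Qed.

(* If [den = 0] then [u = 0], so the junk value [0^-1 = 0] is harmless. *)
Let scale_dot : (c * den) *: u = u.
Proof.
have [den0 | den_neq0] := eqVneq den 0; last by rewrite mulVf ?scale1r.
by move/eqP: den0; rewrite dotmx_eq0 => /eqP ->; rewrite scaler0.
Qed.

Let aT_u : a^T *m u = den%:M.
Proof. by rewrite mulmxA aT_S -uT_S -mulmxA -mx11_scalar. Qed.

Lemma proj_dot : a^T *m S *m a = u^T *m u.
Proof. by rewrite aT_S -{1}uT_S -mulmxA. Qed.

Let proj_stepE : proj_step S a = S - c *: (u *m u^T).
Proof. by []. Qed.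

Lemma orth_proj_step : orth_proj (proj_step S a).
Proof.
rewrite proj_stepE; split.
  by rewrite linearB /= linearZ /= trmx_mul trmxK S_proj.1.
rewrite mulmxBl !mulmxBr -!scalemxAl -!scalemxAr S_proj.2 mulmxA S_u.
rewrite -[u *m u^T *m S]mulmxA uT_S mulmxA -(mulmxA u) uT_u mul_mx_scalar.
by rewrite -scalemxAl (scalerA c den) (scalemxAl (c * den)) scale_dot subrr subr0.
Qed.

Lemma proj_step_orth : a^T *m proj_step S a = 0.
Proof.
rewrite proj_stepE mulmxBr aT_S -scalemxAr mulmxA aT_u mul_scalar_mx scalerA.
by have := congr1 trmx scale_dot; rewrite linearZ /= => ->; rewrite subrr.
Qed.

Lemma proj_step_annih (r : 'rV[R]_d) : r *m S = 0 -> r *m proj_step S a = 0.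
Proof.
move=> rS0; rewrite proj_stepE mulmxBr -scalemxAr /u !mulmxA rS0.
by rewrite !mul0mx scaler0 subrr.
Qed.
End ProjStep.
End OrthogonalProjector.

Section ProjIteration.
Variables (R : realFieldType) (n d : nat) (A : 'M[R]_(n, d)) (w : nat -> 'cV[R]_n).

Fixpoint proj_iter l : 'M[R]_d :=
  if l is l'.+1 then proj_step (proj_iter l') (A^T *m w l') else 1%:M.

Lemma orth_proj_iter l : orth_proj (proj_iter l).
Proof.
elim: l => [|l IH] /=; last exact: orth_proj_step.
by split; rewrite ?trmx1 ?mulmx1.
Qed.

Lemma proj_iter_orth i l : (i < l)%N -> (w i)^T *m A *m proj_iter l = 0.
Proof.
elim: l => // l IH; rewrite ltnS leq_eqVlt => /predU1P [-> | il] /=.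
  by have := proj_step_orth (A^T *m w l) (orth_proj_iter l); rewrite trmx_mul trmxK.
exact: proj_step_annih _ (IH il).
Qed.

End ProjIteration.

Section Iteration.
Variables (R : realType) (n d : nat) (A : 'M[R]_(n, d)) (b : 'cV[R]_n).

Lemma span_upto_proj_iter w k : span_upto A w k *m proj_iter A w k.+1 = 0.
Proof.
by apply/row_matrixP => i; rewrite row_mul rowK row0 proj_iter_orth.
Qed.

Variables (z : 'cV[R]_d) (Az : A *m z = b).

Lemma rk_step_proj (wl : 'cV[R]_n) (S : 'M[R]_d) (y : 'cV[R]_d) : orth_proj S ->
  let S' := proj_step S (A^T *m wl) in rk_step A b wl (z + S *m y, S) = (z + S' *m y, S').
Proof.
move=> S_proj S'; rewrite /rk_step /S' /=.
set a := A^T *m wl; set u := S *m a.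
have wA : wl^T *m A = a^T by rewrite trmx_mul trmxK.
have wAS : wl^T *m A *m S = u^T by rewrite wA /u [(S *m a)^T]trmx_mul S_proj.1.
have -> : S *m A^T *m wl = u by rewrite -mulmxA.
have -> : wl^T *m A *m S *m A^T *m wl = u^T *m u by rewrite -mulmxA wA proj_dot.
have -> : wl^T *m (b - A *m (z + S *m y)) = - (u^T *m y).
  by rewrite -Az [A *m (z + _)]mulmxDr opprD addrA subrr add0r mulmxN !mulmxA wAS.
case: eqP => [u0 | _]; first by rewrite /proj_step -/a -/u u0 !mul0mx scaler0 !subr0.
rewrite /proj_step /= -/a -/u wAS mulmxBl -scalemxAl mulmxN scalerN.
by rewrite -(mulmxA u) addrA.
Qed.

Lemma rk_iter_proj w x0 l :
  rk_iter A b w x0 l = (z + proj_iter A w l *m (x0 - z), proj_iter A w l).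
Proof.
elim: l => [|l IH] /=; first by rewrite mul1mx addrC subrK.
by rewrite IH rk_step_proj //; apply: orth_proj_iter.
Qed.

Lemma rk_iter_solves w x0 k :
  (A <= span_upto A w k)%MS -> A *m (rk_iter A b w x0 k.+1).1 = b.
Proof.
case/submxP=> D A_D.
have AP0 : A *m proj_iter A w k.+1 = 0.
  by rewrite {1}A_D -mulmxA span_upto_proj_iter mulmx0.
by rewrite rk_iter_proj /= mulmxDr Az mulmxA AP0 mul0mx addr0.
Qed.
End Iteration.

Section SamplingRange.
Variables (R : realType) (n d N : nat) (A : 'M[R]_(n, d)) (W : 'I_N -> 'cV[R]_n).

Lemma mem_in_span (S : 'rV[R]_d -> Prop) v : S v -> in_span S v.
Proof. by exists 1%N, (fun=> 1), (fun=> v); rewrite big_ord1 scale1r. Qed.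

Lemma AWmx_mul : AWmx A W = Wmx W *m A.
Proof. by apply/row_matrixP => j; rewrite row_mul !rowK. Qed.

Lemma row_AWmx_mul_tr (z : 'rV[R]_d) j :
  row j (AWmx A W *m z^T) = (z *m (A^T *m W j))^T.
Proof. by rewrite row_mul rowK !trmx_mul !trmxK. Qed.

Lemma AWmx_sub_span_upto (w : nat -> 'cV[R]_n) k :
  (forall j, exists2 i, (i <= k)%N & w i = W j) -> (AWmx A W <= span_upto A w k)%MS.
Proof.
move=> hit; apply/row_subP => j; rewrite rowK.
have [i ik <-] := hit j.
have -> : (w i)^T *m A = row (inord i) (span_upto A w k) by rewrite rowK inordK.
exact: row_sub.
Qed.

Variables (p : 'I_N -> R).
Hypotheses (p_pos : forall j, 0 < p j) (p_sum : \sum_(j < N) p j = 1).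

Lemma NsetP z : Nset A W p z <-> AWmx A W *m z^T = 0.
Proof.
apply: iff_trans (psum_eq1P _ p_pos p_sum) _.
split=> [z0 | /row_matrixP z0 j].
  by apply/row_matrixP => j; rewrite row0 row_AWmx_mul_tr (eqP (z0 j)) trmx0.
by rewrite -[_ *m _]trmxK -row_AWmx_mul_tr z0 row0 trmx0.
Qed.

Lemma RsetP v : Rset A W p v <-> (v <= AWmx A W)%MS.
Proof.
split=> [Rv | /submxP [D ->] z [k [c [u [Nu ->]]]]].
  rewrite submxE; apply/eqP/trmx_inj/row_matrixP => k.
  rewrite trmx0 row0 -tr_col colE -mulmxA -colE -[col k _]trmxK Rv ?trmx0 //.
  by apply/mem_in_span/NsetP; rewrite trmxK colE mulmxA mulmx_coker mul0mx.
rewrite linear_sum mulmx_sumr big1 // => i _.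
by rewrite linearZ -scalemxAr -mulmxA (proj1 (NsetP _) (Nu i)) mulmx0 scaler0.
Qed.

End SamplingRange.

Theorem mainTheorem7 (R : realType) (n d N : nat)
  (A : 'M[R]_(n, d)) (b : 'cV[R]_n)
  (consistent : exists x : 'cV[R]_d, A *m x = b)
  (W : 'I_N -> 'cV[R]_n) (W_inj : injective W)
  (p : 'I_N -> R) (p_pos : forall j, 0 < p j) (p_sum : \sum_(j < N) p j = 1)
  (idx : nat -> 'I_N)
  (wor : forall m : nat, injective (fun i : 'I_N => idx (m * N + i)%N)) :
  let w := fun l : nat => W (idx l) in
  (exists k, covers A W p w k) /\
  forall T : nat, covers A W p w T -> (forall k, covers A W p w k -> (T <= k)%N) ->
    [/\ (T <= N.-1)%N,
        ((AWmx A W == A)%MS ->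
           forall x0 : 'cV[R]_d, A *m (rk_iter A b w x0 T.+1).1 = b)
      & (row_full (Wmx W) -> (AWmx A W == A)%MS)].
Proof.
move=> w.
have cover_N : covers A W p w N.-1.
  move=> v /(RsetP A W p_pos p_sum)/submx_trans; apply; apply: AWmx_sub_span_upto => j.
  have /injF_bij [g _ gK] : injective (fun i : 'I_N => idx i).
    by move=> i i' /= ?; apply: (wor 0); rewrite /= mul0n !add0n.
  by exists (g j); [have := ltn_ord (g j); lia | rewrite /w gK].
split; first by exists N.-1.
move=> T covT Tmin; split; first exact: Tmin.
  move=> AW_A x0; have [z Az] := consistent; apply: (rk_iter_solves Az).
  apply/row_subP => i; apply/covT/(RsetP A W p_pos p_sum).
  by apply: submx_trans (row_sub i A) _; case/andP: AW_A.
by move=> Wfull; rewrite AWmx_mul; apply/eqmxP/eqmxMfull.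
Qed.
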